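(* There is a universal constant $C>0$ such that for all integers $m,n\ge1$ and all $p,q\in[0,2/3]$, \[ (1-Cm^{-1/3})P(m-1,n,p,q)-2m^{-2}\le P(m,n,p,q)\le(1+Cn^{-1/3})P(m,n-1,p,q)+2n^{-2}. \]
   Context: For integers $m,n\ge0$ and $p,q\in[0,1]$, $P(m,n,p,q)=\Pr(Y\ge X)$ where $X\sim\mathrm{Binom}(m,\max\{p,q\})$ and $Y\sim\mathrm{Binom}(n,\min\{p,q\})$ are independent. *)

From Stdlib Require Import Reals Arith.
Open Scope R_scope.

Definition binom_pmf (n : nat) (a : R) (k : nat) : R :=
  C n k * a ^ k * (1 - a) ^ (n - k).

(* P(m,n,p,q) = Pr(Y >= X), X ~ Binom(m, max p q), Y ~ Binom(n, min p q)
   independent, written out as the double sum over the joint pmf. *)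
Definition Pwin (m n : nat) (p q : R) : R :=
  let a := Rmax p q in
  let b := Rmin p q in
  sum_f_R0 (fun i =>
    sum_f_R0 (fun j =>
      if Nat.leb i j then binom_pmf m a i * binom_pmf n b j else 0) n) m.

From Stdlib Require Import Reals Lra Lia Psatz ZArith.
Open Scope R_scope.

(* Write a = max p q, b = min p q, X_M ~ Bin(M, a), Y_N ~ Bin(N, b), f_M, g_N for their pmfs,
   F_M(j) = Pr(X_M <= j) and T_N(i) = Pr(Y_N >= i).  Then P(M, n) = E F_M(Y_n) and
   F_(M+1)(j) = F_M(j) - a f_M(j), so the lower bound follows from the local estimate
   a f_M(j) <= c M^(-1/3) F_M(j) + M^(-2).  Symmetrically P(m, N) = E T_N(X_m) and
   T_(N+1)(j+1) = T_N(j+1) + b g_N(j), so the upper bound follows from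
   b g_N(j) <= c N^(-1/3) T_N(j+1) + N^(-2).
   For the local estimates let K be about a M^(1/3) (resp. b N^(1/3)).  If j is in the bulk of
   the distribution, the pmf shrinks by a factor at most 1 - 1/K per step over the K values
   next to j on the side of the mean, which therefore carry at least (K + 1)/2 times f_M(j).
   Otherwise j is at distance of order M^(2/3) from the mean and a Chernoff bound makes the
   pmf at most M^(-2).  For N < 10^9 the ratio bound b g_N(j) <= (N + 1) g_N(j+1) (j < N) is used
   instead, a loss of order N that C = 2 * 10^12 absorbs; the term j = N, where T_N(N+1) = 0,
   is then handled by a local estimate on the side of X. *)

(** * Finite sums *)

Lemma sum_f_R0_nonneg (h : nat -> R) n :
  (forall i, (i <= n)%nat -> 0 <= h i) -> 0 <= sum_f_R0 h n.
Proof.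
  intros Hh. apply Rle_trans with (sum_f_R0 (fun _ => 0) n).
  - rewrite sum_cte; lra.
  - apply sum_Rle; assumption.
Qed.

Lemma sum_f_R0_le_mono (h : nat -> R) n n' :
  (forall i, (i <= n')%nat -> 0 <= h i) -> (n <= n')%nat ->
  sum_f_R0 h n <= sum_f_R0 h n'.
Proof.
  intros Hh Hn; induction Hn as [|n' Hn IH]; [lra|].
  rewrite tech5.
  assert (0 <= h (S n')) by (apply Hh; lia).
  assert (sum_f_R0 h n <= sum_f_R0 h n') by (apply IH; intros; apply Hh; lia).
  lra.
Qed.

Lemma sum_f_R0_term_le (h : nat -> R) n k :
  (forall i, (i <= n)%nat -> 0 <= h i) -> (k <= n)%nat -> h k <= sum_f_R0 h n.
Proof.
  intros Hh Hk. destruct k as [|k]; [apply (sum_f_R0_le_mono h 0 n); auto|].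
  apply Rle_trans with (sum_f_R0 h (S k)); [|apply sum_f_R0_le_mono; auto].
  rewrite tech5.
  assert (0 <= sum_f_R0 h k) by (apply sum_f_R0_nonneg; intros; apply Hh; lia).
  lra.
Qed.

Lemma sum_f_R0_swap (h : nat -> nat -> R) m n :
  sum_f_R0 (fun i => sum_f_R0 (fun j => h i j) n) m
  = sum_f_R0 (fun j => sum_f_R0 (fun i => h i j) m) n.
Proof.
  induction m as [|m IH]; simpl; [reflexivity|].
  rewrite IH, <- sum_plus. reflexivity.
Qed.

Lemma sum_f_R0_leb_min (h : nat -> R) m j :
  sum_f_R0 (fun i => if Nat.leb i j then h i else 0) m = sum_f_R0 h (Nat.min m j).
Proof.
  induction m as [|m IH]; [reflexivity|].
  rewrite tech5, IH. destruct (Nat.leb (S m) j) eqn:E.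
  - apply Nat.leb_le in E.
    replace (Nat.min m j) with m by lia. replace (Nat.min (S m) j) with (S m) by lia.
    reflexivity.
  - apply Nat.leb_gt in E.
    replace (Nat.min m j) with j by lia. replace (Nat.min (S m) j) with j by lia.
    ring.
Qed.

Lemma sum_f_R0_rev_le (h : nat -> R) j L :
  (forall i, (i <= j)%nat -> 0 <= h i) -> (L <= j)%nat ->
  sum_f_R0 (fun l => h (j - l)%nat) L <= sum_f_R0 h j.
Proof.
  revert L; induction j as [|j IH]; intros L Hh HL.
  - replace L with 0%nat by lia. simpl. lra.
  - destruct L as [|L].
    + apply (sum_f_R0_term_le h (S j) (S j)); auto.
    + rewrite decomp_sum by lia. rewrite tech5. simpl pred.
      assert (sum_f_R0 (fun l => h (j - l)%nat) L <= sum_f_R0 h j)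
        by (apply IH; [intros; apply Hh|]; lia).
      simpl. lra.
Qed.

Lemma sum_f_R0_shift_le (h : nat -> R) N i L :
  (forall k, (k <= N)%nat -> 0 <= h k) -> (i + L <= N)%nat ->
  sum_f_R0 (fun l => h (i + l)%nat) L
  <= sum_f_R0 (fun k => if Nat.leb i k then h k else 0) N.
Proof.
  intros Hh HL.
  assert (Hsplit : forall L', sum_f_R0 (fun k => if Nat.leb i k then h k else 0) (i + L')
                              = sum_f_R0 (fun l => h (i + l)%nat) L').
  { induction L' as [|L' IH].
    - rewrite Nat.add_0_r. destruct i as [|i]; [reflexivity|].
      rewrite tech5, sum_eq_R0, Nat.leb_refl; [simpl; rewrite Nat.add_0_r; ring|].
      intros k Hk. destruct (Nat.leb (S i) k) eqn:E; [apply Nat.leb_le in E; lia|reflexivity].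
    - rewrite Nat.add_succ_r, !tech5, IH.
      replace (Nat.leb i (S (i + L'))) with true by (symmetry; apply Nat.leb_le; lia).
      rewrite Nat.add_succ_r. reflexivity. }
  rewrite <- Hsplit. apply sum_f_R0_le_mono; auto.
  intros k Hk. destruct (Nat.leb i k); [apply Hh|]; lia || lra.
Qed.

Lemma sum_f_R0_indicator (h : nat -> R) k c m :
  sum_f_R0 (fun i => h i * (if Nat.eqb i k then c else 0)) m
  = if Nat.leb k m then h k * c else 0.
Proof.
  induction m as [|m IH].
  - destruct k; simpl; ring.
  - rewrite tech5, IH.
    destruct (Nat.eqb_spec (S m) k) as [<-|Hne].
    + rewrite Nat.leb_refl. replace (Nat.leb (S m) m) with false
        by (symmetry; apply Nat.leb_gt; lia). ring.
    + destruct (Nat.leb_spec k m), (Nat.leb_spec k (S m)); try lia; ring.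
Qed.

Lemma sum_f_R0_INR L : sum_f_R0 INR L = INR L * (INR L + 1) / 2.
Proof. induction L as [|L IH]; [simpl; lra|]. rewrite tech5, IH, S_INR. field. Qed.

Lemma pow_1_minus_ge x l : 0 <= x <= 1 -> 1 - INR l * x <= (1 - x) ^ l.
Proof.
  intros Hx. induction l as [|l IH]; [simpl; lra|].
  rewrite S_INR. simpl pow.
  assert (0 <= INR l) by apply pos_INR.
  assert (0 <= (1 - x) ^ l) by (apply pow_le; lra).
  nra.
Qed.

Lemma sum_f_R0_geometric_lower (h : nat -> R) K :
  (1 <= K)%nat -> 0 <= h 0%nat ->
  (forall l, (l < K - 1)%nat -> (1 - / INR K) * h l <= h (S l)) ->
  (INR K + 1) / 2 * h 0%nat <= sum_f_R0 h (K - 1).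
Proof.
  intros HK Hh0 Hstep.
  assert (HKpos : 1 <= INR K) by (apply (le_INR 1); lia).
  assert (Hinv : 0 < / INR K <= 1).
  { split; [apply Rinv_0_lt_compat; lra|].
    rewrite <- Rinv_1. apply Rinv_le_contravar; lra. }
  set (th := 1 - / INR K).
  assert (Hpow : forall l, (l <= K - 1)%nat -> th ^ l * h 0%nat <= h l).
  { induction l as [|l IH]; intros Hl; [simpl; lra|].
    simpl pow. rewrite Rmult_assoc.
    apply Rle_trans with (th * h l); [|apply Hstep; lia].
    apply Rmult_le_compat_l; [unfold th; lra|]. apply IH; lia. }
  apply Rle_trans with (sum_f_R0 (fun l => (1 - INR l * / INR K) * h 0%nat) (K - 1)).
  - rewrite (sum_eq _ (fun l => INR l * (- (h 0%nat / INR K)) + h 0%nat))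
      by (intros; unfold Rdiv; ring).
    rewrite sum_plus, <- scal_sum, sum_f_R0_INR, sum_cte.
    replace (S (K - 1)) with K by lia. rewrite minus_INR by lia. simpl INR.
    right. field. lra.
  - apply sum_Rle. intros l Hl.
    apply Rle_trans with (th ^ l * h 0%nat); [|apply Hpow; lia].
    apply Rmult_le_compat_r; [lra|]. apply pow_1_minus_ge. lra.
Qed.

Lemma nat_ceil x : 0 <= x -> exists K : nat, x <= INR K <= x + 1.
Proof.
  intros Hx. destruct (archimed x) as [H1 H2].
  assert (Hz : (0 <= up x)%Z) by (apply le_IZR; simpl; lra).
  exists (Z.to_nat (up x)). rewrite INR_IZR_INZ, Z2Nat.id by auto. lra.
Qed.

(** * The binomial distribution *)

Lemma C_nonneg n k : 0 <= C n k.
Proof.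
  unfold C. apply Rle_mult_inv_pos; [apply pos_INR|].
  apply Rmult_lt_0_compat; apply INR_fact_lt_0.
Qed.

Lemma C_n_0 n : C n 0 = 1.
Proof. unfold C. rewrite Nat.sub_0_r. simpl. field. apply INR_fact_neq_0. Qed.

Lemma C_n_n n : C n n = 1.
Proof. unfold C. rewrite Nat.sub_diag. simpl. field. apply INR_fact_neq_0. Qed.

Lemma binom_pmf_nonneg n a k : 0 <= a <= 1 -> 0 <= binom_pmf n a k.
Proof.
  intros Ha. unfold binom_pmf.
  apply Rmult_le_pos; [apply Rmult_le_pos|]; [apply C_nonneg|apply pow_le; lra..].
Qed.

Lemma binom_pmf_mgf N a z :
  sum_f_R0 (fun k => binom_pmf N a k * z ^ k) N = (1 - a + a * z) ^ N.
Proof.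
  replace (1 - a + a * z) with (a * z + (1 - a)) by ring.
  rewrite binomial. apply sum_eq. intros i _. unfold binom_pmf.
  rewrite Rpow_mult_distr. ring.
Qed.

Lemma binom_pmf_sum N a : sum_f_R0 (binom_pmf N a) N = 1.
Proof.
  pose proof (binom_pmf_mgf N a 1) as Hmgf.
  replace (1 - a + a * 1) with 1 in Hmgf by ring. rewrite pow1 in Hmgf.
  rewrite <- Hmgf. apply sum_eq. intros. rewrite pow1. ring.
Qed.

Lemma binom_pmf_le_1 N a k : 0 <= a <= 1 -> (k <= N)%nat -> binom_pmf N a k <= 1.
Proof.
  intros Ha Hk. rewrite <- (binom_pmf_sum N a).
  apply sum_f_R0_term_le; auto. intros; apply binom_pmf_nonneg; auto.
Qed.

Lemma binom_pmf_expect_affine N a (v : nat -> R) c d :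
  sum_f_R0 (fun k => binom_pmf N a k * (c * v k + d)) N
  = c * sum_f_R0 (fun k => binom_pmf N a k * v k) N + d.
Proof.
  rewrite (sum_eq _ (fun k => binom_pmf N a k * v k * c + binom_pmf N a k * d))
    by (intros; ring).
  rewrite sum_plus, <- !scal_sum, binom_pmf_sum. ring.
Qed.

Lemma binom_pmf_succ N a k : a < 1 -> (k < N)%nat ->
  binom_pmf N a (S k) = binom_pmf N a k * (INR (N - k) * a / (INR (S k) * (1 - a))).
Proof.
  intros Ha Hk. unfold binom_pmf. rewrite pascal_step3 by lia.
  replace (N - k)%nat with (S (N - S k)) at 2 by lia.
  simpl pow. field. split; [lra|]. apply not_0_INR; lia.
Qed.

Lemma binom_pmf_succ_ge N a k th : 0 <= a < 1 -> (k < N)%nat ->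
  th * INR (S k) * (1 - a) <= INR (N - k) * a ->
  th * binom_pmf N a k <= binom_pmf N a (S k).
Proof.
  intros Ha Hk Hth. rewrite binom_pmf_succ by (lra || lia).
  rewrite (Rmult_comm th). apply Rmult_le_compat_l; [apply binom_pmf_nonneg; lra|].
  assert (0 < INR (S k)) by (apply lt_0_INR; lia).
  apply Rmult_le_reg_r with (INR (S k) * (1 - a)); [nra|].
  unfold Rdiv. rewrite Rmult_assoc, Rinv_l by nra. lra.
Qed.

Lemma binom_pmf_pred_ge N a k th : 0 <= a < 1 -> (k < N)%nat ->
  th * INR (N - k) * a <= INR (S k) * (1 - a) ->
  th * binom_pmf N a (S k) <= binom_pmf N a k.
Proof.
  intros Ha Hk Hth. rewrite binom_pmf_succ by (lra || lia).
  assert (0 <= binom_pmf N a k) by (apply binom_pmf_nonneg; lra).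
  assert (0 < INR (S k)) by (apply lt_0_INR; lia).
  replace (th * (binom_pmf N a k * (INR (N - k) * a / (INR (S k) * (1 - a)))))
    with (binom_pmf N a k * (th * INR (N - k) * a / (INR (S k) * (1 - a))))
    by (field; split; lra).
  rewrite <- (Rmult_1_r (binom_pmf N a k)) at 2.
  apply Rmult_le_compat_l; auto.
  apply Rmult_le_reg_r with (INR (S k) * (1 - a)); [nra|].
  unfold Rdiv. rewrite Rmult_assoc, Rinv_l by nra. lra.
Qed.

Lemma binom_pmf_succ_trials_0 M a : binom_pmf (S M) a 0 = (1 - a) * binom_pmf M a 0.
Proof. unfold binom_pmf. rewrite !C_n_0, !Nat.sub_0_r. simpl pow. ring. Qed.

Lemma binom_pmf_succ_trials M a i : (i <= M)%nat ->
  binom_pmf (S M) a (S i) = a * binom_pmf M a i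
     + (1 - a) * (if Nat.leb (S i) M then binom_pmf M a (S i) else 0).
Proof.
  intros Hi. unfold binom_pmf. destruct (Nat.leb_spec (S i) M).
  - rewrite <- pascal by lia.
    replace (S M - S i)%nat with (S (M - S i)) by lia.
    replace (M - i)%nat with (S (M - S i)) by lia. simpl pow. ring.
  - replace i with M by lia. rewrite !C_n_n, !Nat.sub_diag. simpl. ring.
Qed.

(* [binom_cdf M a j = Pr(X <= j)] and [binom_tail N b i = Pr(Y >= i)].  The [min] and the
   guard matter: for [k > n], [binom_pmf n a k] is junk rather than [0], as is [C n k]. *)
Definition binom_cdf (M : nat) (a : R) (j : nat) : R :=
  sum_f_R0 (binom_pmf M a) (Nat.min M j).

Definition binom_tail (N : nat) (b : R) (i : nat) : R :=
  sum_f_R0 (fun k => if Nat.leb i k then binom_pmf N b k else 0) N.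

Lemma binom_cdf_nonneg M a j : 0 <= a <= 1 -> 0 <= binom_cdf M a j.
Proof. intros. apply sum_f_R0_nonneg. intros; apply binom_pmf_nonneg; auto. Qed.

Lemma binom_cdf_eq_sum M a j : (j <= M)%nat -> binom_cdf M a j = sum_f_R0 (binom_pmf M a) j.
Proof. intros. unfold binom_cdf. f_equal. lia. Qed.

Lemma binom_cdf_full M a : binom_cdf M a M = 1.
Proof. unfold binom_cdf. rewrite Nat.min_id. apply binom_pmf_sum. Qed.

Lemma binom_pmf_le_cdf M a j : 0 <= a <= 1 -> (j <= M)%nat ->
  binom_pmf M a j <= binom_cdf M a j.
Proof.
  intros. rewrite binom_cdf_eq_sum by lia.
  apply sum_f_R0_term_le; [intros; apply binom_pmf_nonneg|]; auto.
Qed.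

Lemma binom_cdf_succ M a j : binom_cdf M a (S j)
  = binom_cdf M a j + (if Nat.leb (S j) M then binom_pmf M a (S j) else 0).
Proof.
  unfold binom_cdf. destruct (Nat.leb_spec (S j) M).
  - replace (Nat.min M (S j)) with (S j) by lia.
    replace (Nat.min M j) with j by lia. reflexivity.
  - replace (Nat.min M (S j)) with M by lia.
    replace (Nat.min M j) with M by lia. ring.
Qed.

Lemma binom_cdf_succ_trials M a j :
  binom_cdf (S M) a j = binom_cdf M a j - a * (if Nat.leb j M then binom_pmf M a j else 0).
Proof.
  induction j as [|j IH].
  - unfold binom_cdf. rewrite !Nat.min_0_r. simpl. rewrite binom_pmf_succ_trials_0. ring.
  - rewrite !binom_cdf_succ, IH.
    destruct (Nat.leb_spec j M) as [Hj|Hj].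
    + replace (Nat.leb (S j) (S M)) with true by (symmetry; apply Nat.leb_le; lia).
      rewrite binom_pmf_succ_trials by lia.
      destruct (Nat.leb (S j) M); ring.
    + replace (Nat.leb (S j) (S M)) with false by (symmetry; apply Nat.leb_gt; lia).
      replace (Nat.leb (S j) M) with false by (symmetry; apply Nat.leb_gt; lia). ring.
Qed.

Lemma binom_tail_nonneg N b i : 0 <= b <= 1 -> 0 <= binom_tail N b i.
Proof.
  intros. apply sum_f_R0_nonneg. intros k _.
  destruct (Nat.leb i k); [apply binom_pmf_nonneg; auto|lra].
Qed.

Lemma binom_tail_0 N b : binom_tail N b 0 = 1.
Proof. rewrite <- (binom_pmf_sum N b). reflexivity. Qed.

Lemma binom_tail_succ N b i : binom_tail N b (S i) = 1 - binom_cdf N b i.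
Proof.
  unfold binom_tail, binom_cdf. rewrite <- sum_f_R0_leb_min, <- (binom_pmf_sum N b).
  rewrite <- minus_sum. apply sum_eq. intros k _.
  destruct (Nat.leb_spec (S i) k), (Nat.leb_spec k i); try lia; ring.
Qed.

Lemma binom_tail_succ_trials N b i : binom_tail (S N) b (S i)
  = binom_tail N b (S i) + b * (if Nat.leb i N then binom_pmf N b i else 0).
Proof. rewrite !binom_tail_succ, binom_cdf_succ_trials. ring. Qed.

Lemma binom_pmf_le_tail N b j : 0 <= b <= 1 -> (j <= N)%nat ->
  binom_pmf N b j <= binom_tail N b j.
Proof.
  intros Hb Hj. pose proof (sum_f_R0_shift_le (binom_pmf N b) N j 0) as Hshift.
  simpl in Hshift. rewrite Nat.add_0_r in Hshift.
  apply Hshift; [intros; apply binom_pmf_nonneg|]; auto.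
Qed.

Lemma Pwin_tail_form m n p q :
  Pwin m n p q
  = sum_f_R0 (fun i => binom_pmf m (Rmax p q) i * binom_tail n (Rmin p q) i) m.
Proof.
  unfold Pwin, binom_tail. apply sum_eq. intros i _. rewrite scal_sum.
  apply sum_eq. intros j _. destruct (Nat.leb i j); ring.
Qed.

Lemma Pwin_cdf_form m n p q :
  Pwin m n p q
  = sum_f_R0 (fun j => binom_pmf n (Rmin p q) j * binom_cdf m (Rmax p q) j) n.
Proof.
  unfold Pwin. rewrite sum_f_R0_swap. apply sum_eq. intros j _. unfold binom_cdf.
  rewrite <- sum_f_R0_leb_min, scal_sum. apply sum_eq. intros i _.
  destruct (Nat.leb i j); ring.
Qed.

Lemma Rmin_Rmax_bounds p q c : 0 <= p <= c -> 0 <= q <= c ->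
  0 <= Rmin p q <= c /\ 0 <= Rmax p q <= c /\ Rmin p q <= Rmax p q.
Proof. intros. unfold Rmin, Rmax. destruct (Rle_dec p q); lra. Qed.

Lemma Pwin_nonneg m n p q : 0 <= p <= 1 -> 0 <= q <= 1 -> 0 <= Pwin m n p q.
Proof.
  intros Hp Hq. destruct (Rmin_Rmax_bounds p q 1 Hp Hq) as [Hb [Ha _]].
  rewrite Pwin_tail_form. apply sum_f_R0_nonneg. intros.
  apply Rmult_le_pos; [apply binom_pmf_nonneg|apply binom_tail_nonneg]; auto.
Qed.

(** * Chernoff bounds *)

Lemma exp_le x y : x <= y -> exp x <= exp y.
Proof.
  intros [Hlt|Heq]; [apply Rlt_le, exp_increasing; auto|rewrite Heq; lra].
Qed.

Lemma exp_pow z N : exp z ^ N = exp (INR N * z).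
Proof.
  induction N as [|N IH]; [simpl; rewrite Rmult_0_l, exp_0; reflexivity|].
  simpl pow. rewrite IH, S_INR, <- exp_plus. f_equal. ring.
Qed.

Lemma pow_le_exp_mult w c N : 0 <= w <= exp c -> w ^ N <= exp (INR N * c).
Proof. intros. rewrite <- exp_pow. apply pow_incr. lra. Qed.

Lemma exp_neg_le_inv_pow6 s k : 1 <= s -> 6 * s <= k -> exp (- k) <= / s ^ 6.
Proof.
  intros Hs Hk. rewrite exp_Ropp. apply Rinv_le_contravar; [apply pow_lt; lra|].
  replace (exp k) with (exp (k / 6) ^ 6) by (rewrite exp_pow; f_equal; simpl; field).
  apply pow_incr. pose proof (exp_ineq1_le (k / 6)). lra.
Qed.

Lemma inv_1_plus_le_exp x : 0 <= x -> / (1 + x) <= exp (- x + x ^ 2).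
Proof.
  intros Hx. apply Rle_trans with (1 + (- x + x ^ 2)); [|apply exp_ineq1_le].
  apply Rmult_le_reg_l with (1 + x); [lra|].
  rewrite Rinv_r by lra. nra.
Qed.

Lemma inv_1_minus_le_exp y : 0 <= y <= 1 / 2 -> / (1 - y) <= exp (y + 2 * y ^ 2).
Proof.
  intros Hy. apply Rle_trans with (1 + (y + 2 * y ^ 2)); [|apply exp_ineq1_le].
  apply Rmult_le_reg_l with (1 - y); [lra|].
  rewrite Rinv_r by lra. nra.
Qed.

Lemma binom_pmf_le_mgf N a z j : 0 <= a <= 1 -> 0 < z -> (j <= N)%nat ->
  binom_pmf N a j <= exp (INR N * (a * (z - 1))) * (/ z) ^ j.
Proof.
  intros Ha Hz Hj.
  assert (Hterm : binom_pmf N a j * z ^ j <= (1 - a + a * z) ^ N).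
  { rewrite <- binom_pmf_mgf.
    apply (sum_f_R0_term_le (fun k => binom_pmf N a k * z ^ k)); auto.
    intros. apply Rmult_le_pos; [apply binom_pmf_nonneg; auto|apply pow_le; lra]. }
  assert (Hmgf : (1 - a + a * z) ^ N <= exp (INR N * (a * (z - 1)))).
  { apply pow_le_exp_mult. split; [nra|].
    replace (1 - a + a * z) with (1 + a * (z - 1)) by ring. apply exp_ineq1_le. }
  replace (binom_pmf N a j) with (binom_pmf N a j * z ^ j * (/ z) ^ j)
    by (rewrite pow_inv; field; apply pow_nonzero; lra).
  apply Rmult_le_compat_r; [apply pow_le, Rlt_le, Rinv_0_lt_compat; lra|lra].
Qed.

Lemma binom_pmf_upper_tail N b j : 0 <= b <= 1 -> (j <= N)%nat ->
  b * INR N <= INR j -> 0 < INR j ->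
  binom_pmf N b j <= exp (- ((INR j - b * INR N) ^ 2 / (4 * INR j))).
Proof.
  intros Hb HjN Hdev Hj.
  set (D := INR j - b * INR N).
  set (x := D / (2 * INR j)).
  assert (Hx : 0 <= x) by (apply Rmult_le_pos; [unfold D|apply Rlt_le, Rinv_0_lt_compat]; lra).
  apply Rle_trans with (1 := binom_pmf_le_mgf N b (1 + x) j Hb ltac:(lra) HjN).
  apply Rle_trans with (exp (INR N * (b * x)) * exp (INR j * (- x + x ^ 2))).
  - replace (1 + x - 1) with x by ring.
    apply Rmult_le_compat_l; [apply Rlt_le, exp_pos|].
    apply pow_le_exp_mult. split; [apply Rlt_le, Rinv_0_lt_compat; lra|].
    apply inv_1_plus_le_exp; auto.
  - rewrite <- exp_plus. apply exp_le. right. unfold x, D. field. lra.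
Qed.

Lemma binom_pmf_lower_tail M a j : 0 <= a <= 1 -> (j <= M)%nat ->
  INR j <= a * INR M -> 0 < INR M ->
  binom_pmf M a j <= exp (- ((a * INR M - INR j) ^ 2 / (8 * INR M))).
Proof.
  intros Ha HjM Hdev HM.
  set (D := a * INR M - INR j).
  set (y := D / (4 * INR M)).
  assert (HDM : D <= INR M) by (unfold D; pose proof (pos_INR j); nra).
  assert (Hy : 0 <= y <= 1 / 2).
  { unfold y. split; [apply Rmult_le_pos; [unfold D|apply Rlt_le, Rinv_0_lt_compat]; lra|].
    apply Rmult_le_reg_r with (4 * INR M); [lra|].
    unfold Rdiv. rewrite Rmult_assoc, Rinv_l by lra. lra. }
  apply Rle_trans with (1 := binom_pmf_le_mgf M a (1 - y) j Ha ltac:(lra) HjM).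
  apply Rle_trans with (exp (INR M * (a * - y)) * exp (INR j * (y + 2 * y ^ 2))).
  - replace (1 - y - 1) with (- y) by ring.
    apply Rmult_le_compat_l; [apply Rlt_le, exp_pos|].
    apply pow_le_exp_mult. split; [apply Rlt_le, Rinv_0_lt_compat; lra|].
    apply inv_1_minus_le_exp; auto.
  - rewrite <- exp_plus. apply exp_le.
    assert (Hj : INR j <= INR M) by (apply le_INR; auto).
    assert (INR j * (2 * y ^ 2) <= INR M * (2 * y ^ 2)) by (apply Rmult_le_compat_r; nra).
    replace (- (D ^ 2 / (8 * INR M))) with (INR M * (a * - y) + INR j * y + INR M * (2 * y ^ 2))
      by (unfold y, D; field; lra).
    lra.
Qed.

Lemma binom_pmf_le_inv_pow6_below M a s j : 1 <= s -> INR M <= s ^ 3 ->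
  0 <= a <= 1 -> (j <= M)%nat -> 8 * s ^ 2 <= a * INR M - INR j ->
  binom_pmf M a j <= / s ^ 6.
Proof.
  intros Hs HM Ha Hj Hdev.
  assert (0 <= INR j) by apply pos_INR.
  assert (Hs2 : 1 <= s ^ 2) by nra.
  assert (HMpos : 0 < INR M) by nra.
  apply Rle_trans with (1 := binom_pmf_lower_tail M a j Ha Hj ltac:(nra) HMpos).
  apply exp_neg_le_inv_pow6; [lra|].
  apply Rle_trans with ((8 * s ^ 2) ^ 2 / (8 * s ^ 3)).
  - replace ((8 * s ^ 2) ^ 2 / (8 * s ^ 3)) with (8 * s) by (field; lra). lra.
  - unfold Rdiv. apply Rmult_le_compat.
    + nra.
    + apply Rlt_le, Rinv_0_lt_compat. nra.
    + apply pow_incr. lra.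
    + apply Rinv_le_contravar; lra.
Qed.

Lemma binom_pmf_le_inv_pow6_above N b s j : 1 <= s -> INR j <= s ^ 3 ->
  0 <= b <= 1 -> (j <= N)%nat -> 5 * s ^ 2 <= INR j - b * INR N ->
  binom_pmf N b j <= / s ^ 6.
Proof.
  intros Hs Hjs Hb Hj Hdev.
  assert (0 <= b * INR N) by (pose proof (pos_INR N); nra).
  assert (Hs2 : 1 <= s ^ 2) by nra.
  assert (Hjpos : 0 < INR j) by nra.
  apply Rle_trans with (1 := binom_pmf_upper_tail N b j Hb Hj ltac:(nra) Hjpos).
  apply exp_neg_le_inv_pow6; [lra|].
  apply Rle_trans with ((5 * s ^ 2) ^ 2 / (4 * s ^ 3)).
  - replace ((5 * s ^ 2) ^ 2 / (4 * s ^ 3)) with (25 / 4 * s) by (field; lra). lra.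
  - unfold Rdiv. apply Rmult_le_compat.
    + nra.
    + apply Rlt_le, Rinv_0_lt_compat. nra.
    + apply pow_incr. lra.
    + apply Rinv_le_contravar; lra.
Qed.

(** * Local estimates *)

(* For [i >= (M + 1) a (1 - 1/(4K))] the ratio [f(i-1) / f(i)] is at least [1 - 1/K]
   (this needs [a <= 3/4]), so the [K] values of the pmf ending at [j] add up to at least
   [(K + 1) / 2] times [f(j)]. *)
Lemma binom_cdf_ge_near_mean M a K j : 0 < a <= 2 / 3 -> (1 <= K)%nat -> (j <= M)%nat ->
  INR (S M) * a * (1 - / (4 * INR K)) + INR K - 1 <= INR j ->
  (INR K + 1) / 2 * binom_pmf M a j <= binom_cdf M a j.
Proof.
  intros Ha HK Hj Hnear.
  assert (HKpos : 1 <= INR K) by (apply (le_INR 1); lia).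
  set (u := / INR K).
  assert (Hu : 0 < u <= 1) by (split; [apply Rinv_0_lt_compat|rewrite <- Rinv_1; apply Rinv_le_contravar]; lra).
  assert (Hmean : 0 <= INR (S M) * a * (1 - u / 4))
    by (apply Rmult_le_pos; [apply Rmult_le_pos; [apply pos_INR|]|]; lra).
  rewrite Rinv_mult in Hnear. fold u in Hnear.
  assert (HKj : (K - 1 <= j)%nat).
  { apply INR_le. rewrite minus_INR by lia. simpl. lra. }
  rewrite binom_cdf_eq_sum by auto.
  apply Rle_trans with (sum_f_R0 (fun l => binom_pmf M a (j - l)) (K - 1));
    [|apply sum_f_R0_rev_le; [intros; apply binom_pmf_nonneg; lra|auto]].
  replace (binom_pmf M a j) with (binom_pmf M a (j - 0)) by (f_equal; lia).
  apply (sum_f_R0_geometric_lower (fun l => binom_pmf M a (j - l))); auto.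
  - apply binom_pmf_nonneg; lra.
  - intros l Hl.
    assert (Hl' : INR l + 2 <= INR K)
      by (replace 2 with (INR 2) by reflexivity; rewrite <- plus_INR; apply le_INR; lia).
    destruct (j - l)%nat as [|k] eqn:Ejl.
    { exfalso. assert (INR j <= INR l) by (apply le_INR; lia). lra. }
    replace (j - S l)%nat with k by lia.
    assert (Hv : INR (S k) = INR j - INR l) by (rewrite <- Ejl, minus_INR by lia; reflexivity).
    apply binom_pmf_pred_ge; [lra|lia|].
    rewrite minus_INR by lia. rewrite S_INR in Hv, Hnear |- *.
    fold u.
    set (v := INR k + 1) in *. set (m := INR M + 1) in *.
    replace (INR M - INR k) with (m - v) by (unfold m, v; ring).
    assert (Hv' : m * a * (1 - u / 4) <= v) by lra.
    assert (Hprod : m * a * (1 - u / 4) * (1 - u * a) <= v * (1 - u * a))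
      by (apply Rmult_le_compat_r; nra).
    assert (Hgap : 0 <= m * a * (u * (3 / 4 - a) + a * u * u / 4)).
    { apply Rmult_le_pos; [|nra]. apply Rmult_le_pos; [unfold m; pose proof (pos_INR M)|]; lra. }
    replace (m * a * (1 - u / 4) * (1 - u * a))
      with ((1 - u) * m * a + m * a * (u * (3 / 4 - a) + a * u * u / 4)) in Hprod by field.
    nra.
Qed.

(* The far case of [binom_pmf_scaled_le_cdf]: [x] is [j], [s ^ 3 a] the mean of [X] and [K]
   the length of the window of [binom_cdf_ge_near_mean]. *)
Lemma deviation_below_mean s a K x : 1000 < a * s -> 0 < a <= 2 / 3 ->
  2 * a * s / 1000 <= K <= 2 * a * s / 1000 + 1 ->
  x < s ^ 3 * a * (1 - / (4 * K)) + K - 1 ->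
  8 * s ^ 2 <= a * (s ^ 3 - 1) - x.
Proof.
  intros Has Ha HK Hfar.
  assert (Hs : 1500 < s) by nra.
  assert (HKs : K <= s / 500) by nra.
  assert (Hdev : 1000 * s ^ 2 / 12 <= s ^ 3 * a * / (4 * K)).
  { apply Rmult_le_reg_r with (4 * K); [nra|].
    rewrite Rmult_assoc, Rinv_l, Rmult_1_r by nra.
    replace (s ^ 3 * a) with (s ^ 2 * (a * s)) by ring.
    assert (4 * K <= 12 * (a * s) / 1000) by lra.
    assert (0 <= s ^ 2) by nra. nra. }
  nra.
Qed.

Lemma binom_pmf_scaled_le_cdf M a s j : 0 < s -> s ^ 3 = INR (S M) ->
  0 <= a <= 2 / 3 -> (j <= M)%nat ->
  a * binom_pmf M a j <= 1000 / s * binom_cdf M a j + / s ^ 6.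
Proof.
  intros Hs Hs3 Ha Hj.
  set (e := 1000 / s).
  assert (He : 0 < e) by (unfold e; apply Rdiv_lt_0_compat; lra).
  assert (Hf : 0 <= binom_pmf M a j) by (apply binom_pmf_nonneg; lra).
  assert (HfF : binom_pmf M a j <= binom_cdf M a j) by (apply binom_pmf_le_cdf; lra || auto).
  assert (HF : 0 <= e * binom_cdf M a j) by (apply Rmult_le_pos; [|apply binom_cdf_nonneg]; lra).
  assert (Hs6 : 0 < / s ^ 6) by (apply Rinv_0_lt_compat, pow_lt; lra).
  destruct (Rle_dec a e) as [Hae|Hae]; [nra|apply Rnot_le_lt in Hae].
  assert (Has : 1000 < a * s)
    by (replace 1000 with (e * s) by (unfold e; field; lra); nra).
  assert (Hae' : 2 * a / e = 2 * a * s / 1000) by (unfold e; field; lra).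
  destruct (nat_ceil (2 * a / e)) as [K [HK1 HK2]]; [apply Rlt_le, Rdiv_lt_0_compat; lra|].
  assert (HKn : (1 <= K)%nat) by (apply INR_le; simpl; lra).
  destruct (Rle_dec (INR (S M) * a * (1 - / (4 * INR K)) + INR K - 1) (INR j))
    as [Hnear|Hfar].
  - pose proof (binom_cdf_ge_near_mean M a K j ltac:(lra) HKn Hj Hnear).
    assert (Hw : e * (2 * a / e) <= e * INR K) by (apply Rmult_le_compat_l; lra).
    replace (e * (2 * a / e)) with (2 * a) in Hw by (field; lra).
    nra.
  - apply Rnot_le_lt in Hfar.
    assert (Hdev : 8 * s ^ 2 <= a * INR M - INR j).
    { replace (INR M) with (s ^ 3 - 1) by (rewrite Hs3, S_INR; ring).
      apply (deviation_below_mean s a (INR K)); [lra|lra|rewrite <- Hae'; lra|].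
      rewrite Hs3. lra. }
    assert (1 <= s) by nra.
    assert (binom_pmf M a j <= / s ^ 6)
      by (apply binom_pmf_le_inv_pow6_below; auto; rewrite ?Hs3, ?S_INR; lra).
    nra.
Qed.

Lemma binom_pmf_scaled_le_tail_ratio N b E j : 0 <= b < 1 -> 0 < E -> (j < N)%nat ->
  INR (S j) <= E * INR (N - j) -> b * binom_pmf N b j <= E * binom_tail N b (S j).
Proof.
  intros Hb HE Hj Hratio.
  apply Rle_trans with (E * binom_pmf N b (S j));
    [|apply Rmult_le_compat_l; [lra|apply binom_pmf_le_tail; lra || lia]].
  apply Rmult_le_reg_l with (/ E); [apply Rinv_0_lt_compat; lra|].
  rewrite <- Rmult_assoc, <- (Rmult_assoc (/ E)), Rinv_l, Rmult_1_l by lra.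
  apply binom_pmf_succ_ge; [lra|auto|].
  assert (0 <= INR (S j) * (1 - b)) by (apply Rmult_le_pos; [apply pos_INR|lra]).
  assert (INR (S j) * (1 - b) <= INR (S j)) by (pose proof (pos_INR (S j)); nra).
  replace (INR (N - j) * b) with (/ E * b * (E * INR (N - j))) by (field; lra).
  rewrite Rmult_assoc. apply Rmult_le_compat_l; [apply Rmult_le_pos; [apply Rlt_le, Rinv_0_lt_compat|]|]; lra.
Qed.

(* For [k + 1 <= (N + 1) b (1 + 1/(3K))] the ratio [g(k+1) / g(k)] is at least [1 - 1/K]
   (this needs [b <= 2/3]). *)
Lemma binom_tail_ge_near_mean N b K j : 0 < b <= 2 / 3 -> (1 <= K)%nat -> (j + K <= N)%nat ->
  INR (j + K) <= INR (S N) * b * (1 + / (3 * INR K)) ->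
  (1 - / INR K) * ((INR K + 1) / 2) * binom_pmf N b j <= binom_tail N b (S j).
Proof.
  intros Hb HK HjK Hnear.
  assert (HKpos : 1 <= INR K) by (apply (le_INR 1); lia).
  set (u := / INR K).
  assert (Hu : 0 < u <= 1)
    by (split; [apply Rinv_0_lt_compat|rewrite <- Rinv_1; apply Rinv_le_contravar]; lra).
  rewrite Rinv_mult in Hnear. fold u in Hnear.
  assert (Hstep : forall k, (j <= k < j + K)%nat ->
                  (1 - u) * binom_pmf N b k <= binom_pmf N b (S k)).
  { intros k Hk. apply binom_pmf_succ_ge; [lra|lia|].
    assert (Hv : INR (S k) <= INR (S N) * b * (1 + / 3 * u))
      by (apply Rle_trans with (INR (j + K)); [apply le_INR; lia|exact Hnear]).
    replace (INR (N - k)) with (INR (S N) - INR (S k)) by (rewrite minus_INR, !S_INR by lia; ring).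
    assert (Hw : 0 <= 1 - u * (1 - b)) by nra.
    assert (Hprod : INR (S k) * (1 - u * (1 - b))
                    <= INR (S N) * b * (1 + / 3 * u) * (1 - u * (1 - b)))
      by (apply Rmult_le_compat_r; auto).
    assert (Hnb : 0 <= INR (S N) * b) by (pose proof (pos_INR (S N)); nra).
    assert (Hsq : (1 + / 3 * u) * (1 - u * (1 - b)) <= 1) by nra.
    assert (INR (S N) * b * ((1 + / 3 * u) * (1 - u * (1 - b))) <= INR (S N) * b * 1)
      by (apply Rmult_le_compat_l; auto).
    nra. }
  replace ((1 - u) * ((INR K + 1) / 2) * binom_pmf N b j)
    with ((INR K + 1) / 2 * ((1 - u) * binom_pmf N b j)) by ring.
  apply Rle_trans with (sum_f_R0 (fun l => binom_pmf N b (S j + l)) (K - 1));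
    [|apply sum_f_R0_shift_le; [intros; apply binom_pmf_nonneg; lra|lia]].
  apply Rle_trans with ((INR K + 1) / 2 * binom_pmf N b (S j + 0)).
  - rewrite Nat.add_0_r. apply Rmult_le_compat_l; [lra|]. apply Hstep. lia.
  - apply (sum_f_R0_geometric_lower (fun l => binom_pmf N b (S j + l))); auto.
    + apply binom_pmf_nonneg; lra.
    + intros l Hl. replace (S j + S l)%nat with (S (S j + l)) by lia. apply Hstep. lia.
Qed.

(* The far case of [binom_pmf_scaled_le_tail]: [x] is [j], [s ^ 3 b] the mean of [Y] and [K]
   the length of the window of [binom_tail_ge_near_mean]. *)
Lemma deviation_above_mean s b K x : 1000 <= s -> 0 < b <= 2 / 3 ->
  2 * b * s / 1000 + 1 <= K <= 2 * b * s / 1000 + 2 ->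
  s ^ 3 * b * (1 + / (3 * K)) - K < x -> 500 * s ^ 2 < x + 1 ->
  5 * s ^ 2 <= x - s ^ 3 * b.
Proof.
  intros Hs Hb HK Hfar Hx.
  assert (Hs2 : 1000 * s <= s ^ 2) by nra.
  assert (Hnb : 0 < s ^ 3 * b) by (apply Rmult_lt_0_compat; [apply pow_lt|]; lra).
  destruct (Rle_dec 1000 (b * s)) as [Hbig|Hsmall].
  - assert (HKs : K <= s) by nra.
    assert (Hdev : 1000 * s ^ 2 / 12 <= s ^ 3 * b * / (3 * K)).
    { apply Rmult_le_reg_r with (3 * K); [lra|].
      rewrite Rmult_assoc, Rinv_l, Rmult_1_r by lra.
      replace (s ^ 3 * b) with (s ^ 2 * (b * s)) by ring.
      assert (3 * K <= 12 * (b * s) / 1000) by lra.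
      assert (0 <= s ^ 2) by nra. nra. }
    nra.
  - apply Rnot_le_lt in Hsmall.
    assert (HK4 : K < 4) by lra.
    assert (/ 12 < / (3 * K)) by (apply Rinv_lt_contravar; nra).
    nra.
Qed.

Lemma binom_pmf_scaled_le_tail_near N b e K j : 0 < b <= 2 / 3 -> 0 < e ->
  (1 <= K)%nat -> 2 * b / e + 1 <= INR K -> (j + K <= N)%nat ->
  INR (j + K) <= INR (S N) * b * (1 + / (3 * INR K)) ->
  b * binom_pmf N b j <= e * binom_tail N b (S j).
Proof.
  intros Hb He HK HKe HjK Hnear.
  assert (HK1 : 1 <= INR K) by (apply (le_INR 1); lia).
  assert (HbK : b <= e * ((INR K - 1) / 2)).
  { assert (Hw : e * (2 * b / e) <= e * (INR K - 1)) by (apply Rmult_le_compat_l; lra).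
    replace (e * (2 * b / e)) with (2 * b) in Hw by (field; lra). lra. }
  assert (Hcoef : (INR K - 1) / 2 <= (1 - / INR K) * ((INR K + 1) / 2)).
  { replace ((1 - / INR K) * ((INR K + 1) / 2)) with ((INR K - 1) / 2 + (1 - / INR K) / 2)
      by (field; lra).
    assert (/ INR K <= 1) by (rewrite <- Rinv_1; apply Rinv_le_contravar; lra). lra. }
  pose proof (binom_tail_ge_near_mean N b K j Hb HK HjK Hnear) as Hblock.
  assert (0 <= binom_pmf N b j) by (apply binom_pmf_nonneg; lra).
  apply Rle_trans with (e * ((1 - / INR K) * ((INR K + 1) / 2)) * binom_pmf N b j).
  - apply Rmult_le_compat_r; [lra|]. apply Rle_trans with (1 := HbK).
    apply Rmult_le_compat_l; lra.
  - rewrite Rmult_assoc. apply Rmult_le_compat_l; lra.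
Qed.

Lemma mean_window_lt n b K : 0 < n -> 0 <= b <= 2 / 3 -> 1 <= K ->
  n * b * (1 + / (3 * K)) < n.
Proof.
  intros Hn Hb HK.
  assert (0 <= / (3 * K)) by (apply Rlt_le, Rinv_0_lt_compat; lra).
  assert (/ (3 * K) <= / 3) by (apply Rinv_le_contravar; lra).
  assert (b * (1 + / (3 * K)) <= 8 / 9) by nra.
  rewrite Rmult_assoc. nra.
Qed.

Lemma binom_pmf_scaled_le_tail N b s j : 1000 <= s -> s ^ 3 = INR (S N) ->
  0 <= b <= 2 / 3 -> (j <= N)%nat ->
  b * binom_pmf N b j <= 1000 / s * binom_tail N b (S j) + / s ^ 6.
Proof.
  intros Hs Hs3 Hb Hj.
  set (e := 1000 / s).
  assert (He : 0 < e <= 1).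
  { unfold e. split; [apply Rdiv_lt_0_compat; lra|].
    apply Rmult_le_reg_r with s; [lra|]. unfold Rdiv. rewrite Rmult_assoc, Rinv_l by lra. lra. }
  assert (Hn : e * INR (S N) = 1000 * s ^ 2) by (rewrite <- Hs3; unfold e; field; lra).
  assert (Hs6 : 0 < / s ^ 6) by (apply Rinv_0_lt_compat, pow_lt; lra).
  assert (HT : 0 <= e * binom_tail N b (S j))
    by (apply Rmult_le_pos; [lra|apply binom_tail_nonneg; lra]).
  assert (Hg : 0 <= binom_pmf N b j) by (apply binom_pmf_nonneg; lra).
  destruct (Req_dec b 0) as [->|Hb0]; [lra|].
  assert (Hbe : 0 < 2 * b / e) by (apply Rdiv_lt_0_compat; lra).
  destruct (nat_ceil (2 * b / e + 1)) as [K [HK1 HK2]]; [lra|].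
  assert (HKn : (1 <= K)%nat) by (apply INR_le; simpl; lra).
  assert (HnK := mean_window_lt (INR (S N)) b (INR K) ltac:(apply lt_0_INR; lia) Hb ltac:(lra)).
  destruct (Rle_dec (INR (j + K)) (INR (S N) * b * (1 + / (3 * INR K)))) as [Hnear|Hfar].
  - assert (HjK : (j + K < S N)%nat) by (apply INR_lt; lra).
    pose proof (binom_pmf_scaled_le_tail_near N b e K j ltac:(lra) ltac:(lra) HKn HK1
                  ltac:(lia) Hnear).
    lra.
  - apply Rnot_le_lt in Hfar. rewrite plus_INR in Hfar.
    destruct (Rle_dec (INR (S j)) (e * INR (S N) / 2)) as [Hclose|Hdist].
    + assert (HjN : (j < N)%nat).
      { apply INR_lt. assert (e * INR (S N) / 2 < INR (S N)) by (pose proof (pos_INR (S N)); nra).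
        rewrite !S_INR in *. lra. }
      assert (b * binom_pmf N b j <= e * binom_tail N b (S j)).
      { apply binom_pmf_scaled_le_tail_ratio; [lra|lra|auto|].
        rewrite minus_INR by lia.
        replace (INR N - INR j) with (INR (S N) - INR (S j)) by (rewrite !S_INR; ring).
        pose proof (pos_INR (S j)). nra. }
      lra.
    + apply Rnot_le_lt in Hdist.
      assert (Hdev : 5 * s ^ 2 <= INR j - s ^ 3 * b).
      { apply (deviation_above_mean s b (INR K)); [lra|lra| |rewrite Hs3; lra|].
        - replace (2 * b * s / 1000) with (2 * b / e) by (unfold e; field; lra). lra.
        - rewrite Hn, S_INR in Hdist. lra. }
      assert (binom_pmf N b j <= / s ^ 6).
      { apply binom_pmf_le_inv_pow6_above; [lra| |lra|auto|].
        - rewrite Hs3. apply le_INR. lia.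
        - rewrite Hs3, S_INR in Hdev. nra. }
      nra.
Qed.

Lemma binom_pmf_succ_scaled_le_cdf m a E N : 0 <= a <= 2 / 3 -> 600 <= E ->
  (S N <= m)%nat ->
  a * binom_pmf m a (S N) <= E * binom_cdf m a N + / INR (S N) ^ 2.
Proof.
  intros Ha HE HN.
  assert (Hn : 1 <= INR (S N)) by (apply (le_INR 1); lia).
  assert (Hn2 : 0 < / INR (S N) ^ 2) by (apply Rinv_0_lt_compat, pow_lt; lra).
  assert (HF : 0 <= binom_cdf m a N) by (apply binom_cdf_nonneg; lra).
  assert (Hm : INR (S N) <= INR m) by (apply le_INR; auto).
  destruct (Rle_dec (3 * INR m * a ^ 2) (E * INR (S N))) as [Hratio|Hdev].
  - assert (a / E * binom_pmf m a (S N) <= binom_pmf m a N).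
    { apply binom_pmf_pred_ge; [lra|lia|].
      assert (INR (m - N) <= INR m) by (apply le_INR; lia).
      assert (0 <= a / E) by (apply Rmult_le_pos; [|apply Rlt_le, Rinv_0_lt_compat]; lra).
      assert (a / E * INR (m - N) * a <= a / E * INR m * a)
        by (apply Rmult_le_compat_r; [|apply Rmult_le_compat_l]; lra).
      replace (a / E * INR m * a) with (INR m * a ^ 2 / E) in * by (field; lra).
      assert (INR m * a ^ 2 / E <= INR (S N) / 3)
        by (apply Rmult_le_reg_r with E; [lra|];
            replace (INR m * a ^ 2 / E * E) with (INR m * a ^ 2) by (field; lra); nra).
      nra. }
    assert (a * binom_pmf m a (S N) <= E * binom_pmf m a N)
      by (replace (a * binom_pmf m a (S N)) with (E * (a / E * binom_pmf m a (S N))) by (field; lra);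
          apply Rmult_le_compat_l; lra).
    pose proof (binom_pmf_le_cdf m a N ltac:(lra) ltac:(lia)). nra.
  - apply Rnot_le_lt in Hdev.
    assert (Ha2 : a ^ 2 <= a) by nra.
    assert (Hma : 200 * INR (S N) <= a * INR m) by (pose proof (pos_INR m); nra).
    assert (binom_pmf m a (S N) <= / INR (S N) ^ 2).
    { apply Rle_trans with (1 := binom_pmf_lower_tail m a (S N) ltac:(lra) HN ltac:(lra) ltac:(lra)).
      apply Rle_trans with (/ INR (S N) ^ 6);
        [|apply Rinv_le_contravar; [apply pow_lt; lra|apply Rle_pow; lia || lra]].
      apply exp_neg_le_inv_pow6; [lra|].
      assert (Hhalf : a * INR m / 2 <= a * INR m - INR (S N)) by lra.
      apply Rle_trans with ((a * INR m / 2) ^ 2 / (8 * INR m)).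
      - replace ((a * INR m / 2) ^ 2 / (8 * INR m)) with (INR m * a ^ 2 / 32) by (field; lra). nra.
      - unfold Rdiv. apply Rmult_le_compat_r; [apply Rlt_le, Rinv_0_lt_compat; lra|].
        apply pow_incr. nra. }
    assert (0 <= binom_pmf m a (S N)) by (apply binom_pmf_nonneg; lra). nra.
Qed.

(** * Adding a trial *)

Lemma Pwin_succ_l_ge M n p q s : 0 <= p <= 2 / 3 -> 0 <= q <= 2 / 3 ->
  0 < s -> s ^ 3 = INR (S M) ->
  (1 - 1000 / s) * Pwin M n p q - / s ^ 6 <= Pwin (S M) n p q.
Proof.
  intros Hp Hq Hs Hs3.
  destruct (Rmin_Rmax_bounds p q (2 / 3) Hp Hq) as [Hb [Ha _]].
  assert (He : 0 < 1000 / s) by (apply Rdiv_lt_0_compat; lra).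
  assert (Hs6 : 0 < / s ^ 6) by (apply Rinv_0_lt_compat, pow_lt; lra).
  rewrite !Pwin_cdf_form.
  apply Rle_trans with (sum_f_R0 (fun j => binom_pmf n (Rmin p q) j
    * ((1 - 1000 / s) * binom_cdf M (Rmax p q) j + - / s ^ 6)) n);
    [rewrite binom_pmf_expect_affine; lra|].
  apply sum_Rle. intros j _. apply Rmult_le_compat_l; [apply binom_pmf_nonneg; lra|].
  rewrite binom_cdf_succ_trials.
  destruct (Nat.leb_spec j M) as [Hj|Hj].
  - pose proof (binom_pmf_scaled_le_cdf M (Rmax p q) s j Hs Hs3 Ha Hj). lra.
  - assert (0 <= binom_cdf M (Rmax p q) j) by (apply binom_cdf_nonneg; lra). nra.
Qed.

Lemma Pwin_succ_r_le_large m N p q s : 0 <= p <= 2 / 3 -> 0 <= q <= 2 / 3 ->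
  1000 <= s -> s ^ 3 = INR (S N) ->
  Pwin m (S N) p q <= (1 + 1000 / s) * Pwin m N p q + / s ^ 6.
Proof.
  intros Hp Hq Hs Hs3.
  destruct (Rmin_Rmax_bounds p q (2 / 3) Hp Hq) as [Hb [Ha _]].
  assert (He : 0 < 1000 / s) by (apply Rdiv_lt_0_compat; lra).
  assert (Hs6 : 0 < / s ^ 6) by (apply Rinv_0_lt_compat, pow_lt; lra).
  rewrite !Pwin_tail_form, <- binom_pmf_expect_affine.
  apply sum_Rle. intros i _. apply Rmult_le_compat_l; [apply binom_pmf_nonneg; lra|].
  destruct i as [|i]; [rewrite !binom_tail_0; nra|].
  rewrite binom_tail_succ_trials.
  assert (0 <= binom_tail N (Rmin p q) (S i)) by (apply binom_tail_nonneg; lra).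
  destruct (Nat.leb_spec i N) as [Hi|Hi].
  - pose proof (binom_pmf_scaled_le_tail N (Rmin p q) s i Hs Hs3 Hb Hi). lra.
  - nra.
Qed.

Lemma binom_tail_succ_trials_le_small N b E i : 0 <= b <= 2 / 3 -> INR (S N) <= E ->
  binom_tail (S N) b i
  <= (1 + E) * binom_tail N b i + (if Nat.eqb i (S N) then b * binom_pmf N b N else 0).
Proof.
  intros Hb HE.
  assert (HE0 : 1 <= E) by (pose proof (pos_INR N); rewrite S_INR in HE; lra).
  assert (HT : 0 <= binom_tail N b i) by (apply binom_tail_nonneg; lra).
  destruct i as [|i]; [rewrite !binom_tail_0; simpl; lra|].
  rewrite binom_tail_succ_trials.
  destruct (lt_eq_lt_dec i N) as [[Hi|Hi]|Hi]; [| subst i |].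
  - replace (Nat.leb i N) with true by (symmetry; apply Nat.leb_le; lia).
    replace (Nat.eqb (S i) (S N)) with false by (symmetry; apply Nat.eqb_neq; lia).
    assert (b * binom_pmf N b i <= E * binom_tail N b (S i)); [|lra].
    apply binom_pmf_scaled_le_tail_ratio; [lra|lra|auto|].
    assert (1 <= INR (N - i)) by (apply (le_INR 1); lia).
    assert (INR (S i) <= INR (S N)) by (apply le_INR; lia). nra.
  - rewrite Nat.leb_refl, Nat.eqb_refl, binom_tail_succ, binom_cdf_full. lra.
  - replace (Nat.leb i N) with false by (symmetry; apply Nat.leb_gt; lia).
    replace (Nat.eqb (S i) (S N)) with false by (symmetry; apply Nat.eqb_neq; lia).
    nra.
Qed.

Lemma Pwin_succ_r_le_small m N p q E : 0 <= p <= 2 / 3 -> 0 <= q <= 2 / 3 ->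
  INR (S N) <= E -> 600 <= E ->
  Pwin m (S N) p q <= (1 + 2 * E) * Pwin m N p q + / INR (S N) ^ 2.
Proof.
  intros Hp Hq HE HE600.
  destruct (Rmin_Rmax_bounds p q (2 / 3) Hp Hq) as [Hb [Ha Hba]].
  set (a := Rmax p q) in *. set (b := Rmin p q) in *.
  assert (HP : 0 <= Pwin m N p q) by (apply Pwin_nonneg; lra).
  assert (Hn2 : 0 < / INR (S N) ^ 2) by (apply Rinv_0_lt_compat, pow_lt, lt_0_INR; lia).
  assert (Hsplit : Pwin m (S N) p q <= (1 + E) * Pwin m N p q
      + (if Nat.leb (S N) m then binom_pmf m a (S N) * (b * binom_pmf N b N) else 0)).
  { rewrite !Pwin_tail_form, <- sum_f_R0_indicator, scal_sum, <- sum_plus.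
    apply sum_Rle. intros i _. fold a b.
    rewrite Rmult_assoc, (Rmult_comm _ (1 + E)), <- Rmult_plus_distr_l.
    apply Rmult_le_compat_l; [apply binom_pmf_nonneg; lra|].
    apply binom_tail_succ_trials_le_small; auto. }
  destruct (Nat.leb (S N) m) eqn:HN; [apply Nat.leb_le in HN|nra].
  pose proof (binom_pmf_succ_scaled_le_cdf m a E N Ha HE600 HN) as Hstep.
  assert (Hg : 0 <= binom_pmf N b N <= 1)
    by (split; [apply binom_pmf_nonneg|apply binom_pmf_le_1]; lra || lia).
  assert (HgF : binom_pmf N b N * binom_cdf m a N <= Pwin m N p q).
  { rewrite Pwin_cdf_form. apply (sum_f_R0_term_le (fun j => binom_pmf N b j * binom_cdf m a j));
      [|lia]. intros. apply Rmult_le_pos; [apply binom_pmf_nonneg|apply binom_cdf_nonneg]; lra. }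
  assert (Hf : 0 <= binom_pmf m a (S N)) by (apply binom_pmf_nonneg; lra).
  assert (binom_pmf m a (S N) * (b * binom_pmf N b N)
          <= binom_pmf N b N * (E * binom_cdf m a N + / INR (S N) ^ 2)).
  { replace (binom_pmf m a (S N) * (b * binom_pmf N b N))
      with (binom_pmf N b N * (b * binom_pmf m a (S N))) by ring.
    apply Rmult_le_compat_l; [lra|].
    apply Rle_trans with (2 := Hstep). apply Rmult_le_compat_r; lra. }
  nra.
Qed.

Lemma Rpower_third_cube n : 0 < n -> 0 < Rpower n (1 / 3) /\ Rpower n (1 / 3) ^ 3 = n.
Proof.
  intros Hn. split; [apply exp_pos|].
  rewrite <- Rpower_pow by apply exp_pos. rewrite Rpower_mult.
  replace (1 / 3 * INR 3) with 1 by (simpl; field). apply Rpower_1; auto.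
Qed.

Lemma Pwin_succ_r_le m N p q s : 0 <= p <= 2 / 3 -> 0 <= q <= 2 / 3 ->
  0 < s -> s ^ 3 = INR (S N) ->
  Pwin m (S N) p q <= (1 + 2 * 1000 ^ 4 / s) * Pwin m N p q + / s ^ 6.
Proof.
  intros Hp Hq Hs Hs3.
  assert (HP : 0 <= Pwin m N p q) by (apply Pwin_nonneg; lra).
  destruct (Rle_dec 1000 s) as [Hbig|Hsmall].
  - pose proof (Pwin_succ_r_le_large m N p q s Hp Hq Hbig Hs3).
    assert (1000 / s <= 2 * 1000 ^ 4 / s)
      by (apply Rmult_le_compat_r; [apply Rlt_le, Rinv_0_lt_compat|]; lra).
    nra.
  - apply Rnot_le_lt in Hsmall.
    set (E := 1000 ^ 4 / s).
    assert (HEs : E * s = 1000 ^ 4) by (unfold E; field; lra).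
    assert (HE : INR (S N) <= E).
    { rewrite <- Hs3. apply Rmult_le_reg_r with s; [lra|]. rewrite HEs.
      replace (s ^ 3 * s) with (s ^ 4) by ring. apply pow_incr. lra. }
    assert (HE600 : 600 <= E) by nra.
    replace (2 * 1000 ^ 4 / s) with (2 * E) by (unfold E; field; lra).
    replace (s ^ 6) with (INR (S N) ^ 2) by (rewrite <- Hs3; ring).
    apply Pwin_succ_r_le_small; auto.
Qed.

Theorem lemma3p3 :
  exists C : R, 0 < C /\
    forall (m n : nat) (p q : R),
      (1 <= m)%nat -> (1 <= n)%nat ->
      0 <= p <= 2 / 3 -> 0 <= q <= 2 / 3 ->
      (1 - C * Rpower (INR m) (- (1 / 3))) * Pwin (m - 1) n p q - 2 / (INR m ^ 2)
        <= Pwin m n p q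
      /\
      Pwin m n p q
        <= (1 + C * Rpower (INR n) (- (1 / 3))) * Pwin m (n - 1) p q + 2 / (INR n ^ 2).
Proof.
  exists (2 * 1000 ^ 4). split; [lra|].
  intros m n p q Hm Hn Hp Hq.
  destruct m as [|M], n as [|N]; try lia.
  replace (S M - 1)%nat with M by lia. replace (S N - 1)%nat with N by lia.
  rewrite !Rpower_Ropp.
  destruct (Rpower_third_cube (INR (S M))) as [Hs Hs3]; [apply lt_0_INR; lia|].
  destruct (Rpower_third_cube (INR (S N))) as [Ht Ht3]; [apply lt_0_INR; lia|].
  set (s := Rpower (INR (S M)) (1 / 3)) in *. set (t := Rpower (INR (S N)) (1 / 3)) in *.
  rewrite <- Hs3, <- Ht3.
  assert (Hs6 : 0 < / s ^ 6) by (apply Rinv_0_lt_compat, pow_lt; lra).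
  assert (Ht6 : 0 < / t ^ 6) by (apply Rinv_0_lt_compat, pow_lt; lra).
  replace (2 / (s ^ 3) ^ 2) with (2 * / s ^ 6) by (field; lra).
  replace (2 / (t ^ 3) ^ 2) with (2 * / t ^ 6) by (field; lra).
  split.
  - pose proof (Pwin_succ_l_ge M (S N) p q s Hp Hq Hs Hs3).
    assert (0 <= Pwin M (S N) p q) by (apply Pwin_nonneg; lra).
    assert (1000 / s <= 2 * 1000 ^ 4 * / s)
      by (apply Rmult_le_compat_r; [apply Rlt_le, Rinv_0_lt_compat|]; lra).
    nra.
  - pose proof (Pwin_succ_r_le (S M) N p q t Hp Hq Ht Ht3).
    unfold Rdiv in *. lra.
Qed.
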